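(* Let $0\le a\le b\le1$, and in $l_\infty^2$ let $H_1=\{(\xi_1,\xi_2):\xi_2\ge a\xi_1\}$ and $H_2=\{(\xi_1,\xi_2):\xi_2\le b\xi_1\}$ with the restricted metrics. Let $X$ be the gluing of $H_1$ and $H_2$ along $\mathbb{R}$ via the isometries $\xi\mapsto(\xi,a\xi)\in H_1$ and $\xi\mapsto(\xi,b\xi)\in H_2$ (i.e. identifying $(\xi,a\xi)$ with $(\xi,b\xi)$). Then $X$ is hyperconvex if and only if $a=b$.
   Context: $l_\infty^2$ is $\mathbb{R}^2$ with the metric $d((\xi_1,\xi_2),(\eta_1,\eta_2))=\max(|\xi_1-\eta_1|,|\xi_2-\eta_2|)$. A metric space is hyperconvex if every collection of closed balls $\{B(x_i,r_i)\}$ with $d(x_i,x_j)\le r_i+r_j$ has non-empty intersection. The gluing of $X_1,X_2$ along $A$ via isometric embeddings $\varphi_k\colon A\to X_k$ with closed images is $X_1\sqcup X_2/(\varphi_1(a)\sim\varphi_2(a))$ with metric $d_k$ on $X_k$ and $d(x,y)=\inf_{a\in A}\{d_1(x,\varphi_1(a))+d_2(\varphi_2(a),y)\}$ for $x\in X_1,y\in X_2$. *)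

From Stdlib Require Import Reals Lra.
Open Scope R_scope.

Definition linf (p q : R * R) : R :=
  Rmax (Rabs (fst p - fst q)) (Rabs (snd p - snd q)).

Lemma linf_nonneg (p q : R * R) : 0 <= linf p q.
Proof. unfold linf. eapply Rle_trans; [apply Rabs_pos | apply Rmax_l]. Qed.

Definition hyperconvex {T : Type} (d : T -> T -> R) : Prop :=
  forall (I : Type) (x : I -> T) (r : I -> R),
    (forall i j, d (x i) (x j) <= r i + r j) ->
    exists z : T, forall i, d (x i) z <= r i.

Section Inf.
Variable f : R -> R.
Hypothesis f_nonneg : forall t, 0 <= f t.
Let E : R -> Prop := fun y => exists t, y = - f t.
Lemma infE_bound : bound E.
Proof. exists 0. intros y [t ->]. specialize (f_nonneg t). lra. Qed.
Lemma infE_ne : exists y, E y.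
Proof. exists (- f 0). exists 0. reflexivity. Qed.
Definition inf_nonneg : R := - proj1_sig (completeness E infE_bound infE_ne).
End Inf.

Definition H1 (a : R) := { p : R * R | a * fst p <= snd p }.
Definition H2 (b : R) := { p : R * R | snd p <= b * fst p }.

(* Carrier of the gluing: the disjoint union H1 + H2 (equipped with the
   gluing pseudometric; the glued space X is its metric quotient). *)
Definition Glue (a b : R) : Type := (H1 a + H2 b)%type.

Definition cross (a b : R) (p q : R * R) : R :=
  inf_nonneg (fun t => linf p (t, a * t) + linf (t, b * t) q)
    (fun t => Rplus_le_le_0_compat _ _ (linf_nonneg _ _) (linf_nonneg _ _)).

Definition dGlue (a b : R) (x y : Glue a b) : R :=
  match x, y with
  | inl p, inl q => linf (proj1_sig p) (proj1_sig q)
  | inr p, inr q => linf (proj1_sig p) (proj1_sig q)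
  | inl p, inr q => cross a b (proj1_sig p) (proj1_sig q)
  | inr p, inl q => cross a b (proj1_sig q) (proj1_sig p)
  end.

From Stdlib Require Import Reals.
From Stdlib Require Import Lra Psatz Classical.
Open Scope R_scope.

(* If a = b, the two half-planes cover the plane and meet along the common
   boundary line; every segment from H1 to H2 crosses that line, so the
   gluing metric is just the restriction of the l_infinity metric, which is
   hyperconvex coordinatewise (Helly on the line).
   If a < b, take s = 1/(1+b), d = (b-a)s and the balls
   B((0,1) in H1, 1), B((0,-1) in H2, 1-d), B((1,0) in H2, d).  Gluing at
   xi = -s and xi = s shows they meet pairwise, but a common point in H1 is
   at distance >= 1 from (0,-1), and a common point in H2 lies in the open
   fourth quadrant, where every path to (0,1) through the glued line is
   longer than 1. *)

Section InfNonneg.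

Variable f : R -> R.
Hypothesis f_nonneg : forall t, 0 <= f t.

Lemma inf_nonneg_le t : inf_nonneg f f_nonneg <= f t.
Proof.
  unfold inf_nonneg. destruct (completeness _ _ _) as [m [Hub Hlub]]; simpl.
  assert (- f t <= m) by (apply Hub; exists t; reflexivity). lra.
Qed.

Lemma inf_nonneg_ge c : (forall t, c <= f t) -> c <= inf_nonneg f f_nonneg.
Proof.
  intros Hc. unfold inf_nonneg. destruct (completeness _ _ _) as [m [Hub Hlub]]; simpl.
  assert (m <= - c) by (apply Hlub; intros y [t ->]; specialize (Hc t); lra).
  lra.
Qed.

End InfNonneg.

Lemma cross_le a b p q t :
  cross a b p q <= linf p (t, a * t) + linf (t, b * t) q.
Proof. unfold cross. exact (inf_nonneg_le _ _ t). Qed.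

Lemma cross_ge a b p q c :
  (forall t, c <= linf p (t, a * t) + linf (t, b * t) q) -> c <= cross a b p q.
Proof. unfold cross. exact (inf_nonneg_ge _ _ c). Qed.

Lemma linf_sym p q : linf p q = linf q p.
Proof. unfold linf. now rewrite (Rabs_minus_sym (fst p)), (Rabs_minus_sym (snd p)). Qed.

Lemma linf_ge_fst p q : Rabs (fst p - fst q) <= linf p q.
Proof. apply Rmax_l. Qed.

Lemma linf_ge_snd p q : Rabs (snd p - snd q) <= linf p q.
Proof. apply Rmax_r. Qed.

Lemma linf_le p q M :
  Rabs (fst p - fst q) <= M -> Rabs (snd p - snd q) <= M -> linf p q <= M.
Proof. apply Rmax_lub. Qed.

Lemma linf_triangle p q w : linf p w <= linf p q + linf q w.
Proof.
  apply linf_le.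
  - replace (fst p - fst w) with ((fst p - fst q) + (fst q - fst w)) by ring.
    eapply Rle_trans; [apply Rabs_triang|].
    apply Rplus_le_compat; apply linf_ge_fst.
  - replace (snd p - snd w) with ((snd p - snd q) + (snd q - snd w)) by ring.
    eapply Rle_trans; [apply Rabs_triang|].
    apply Rplus_le_compat; apply linf_ge_snd.
Qed.

Lemma hyperconvex_Rdist : hyperconvex (fun x y : R => Rabs (x - y)).
Proof.
  intros I c r H.
  destruct (classic (inhabited I)) as [[i0]|Hempty].
  2: { exists 0; intros i; exfalso; exact (Hempty (inhabits i)). }
  set (E := fun y => exists i, y = c i - r i).
  assert (HE : bound E).
  { exists (c i0 + r i0); intros y [i ->].
    pose proof (Rle_abs (c i - c i0)); specialize (H i i0); lra. }
  destruct (completeness E HE (ex_intro _ _ (ex_intro _ i0 eq_refl)))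
    as [m [Hub Hlub]].
  exists m; intros i. apply Rabs_le.
  assert (c i - r i <= m) by (apply Hub; exists i; reflexivity).
  assert (m <= c i + r i).
  { apply Hlub; intros y [j ->].
    pose proof (Rle_abs (c j - c i)); specialize (H j i); lra. }
  lra.
Qed.

Lemma hyperconvex_linf : hyperconvex linf.
Proof.
  intros I x r H.
  destruct (hyperconvex_Rdist I (fun i => fst (x i)) r) as [z1 Hz1].
  { intros i j; eapply Rle_trans; [apply linf_ge_fst | apply H]. }
  destruct (hyperconvex_Rdist I (fun i => snd (x i)) r) as [z2 Hz2].
  { intros i j; eapply Rle_trans; [apply linf_ge_snd | apply H]. }
  exists (z1, z2); intros i; apply linf_le; auto.
Qed.

Lemma hyperconvex_isometric_surj {T U : Type} (d : T -> T -> R) (e : U -> U -> R)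
  (f : T -> U) :
  (forall x y, d x y = e (f x) (f y)) -> (forall u, exists x, f x = u) ->
  hyperconvex e -> hyperconvex d.
Proof.
  intros Hiso Hsurj He I x r H.
  destruct (He I (fun i => f (x i)) r) as [u Hu].
  { intros i j; rewrite <- Hiso; apply H. }
  destruct (Hsurj u) as [z <-].
  exists z; intros i; rewrite Hiso; apply Hu.
Qed.

Definition lerp (s : R) (p q : R * R) : R * R :=
  (fst p + s * (fst q - fst p), snd p + s * (snd q - snd p)).

Lemma linf_scale k p q :
  0 <= k -> Rmax (Rabs (k * (fst p - fst q))) (Rabs (k * (snd p - snd q))) = k * linf p q.
Proof.
  intros Hk. unfold linf. rewrite !Rabs_mult, (Rabs_pos_eq k) by exact Hk.
  now apply RmaxRmult.
Qed.

Lemma linf_lerp_l s p q : 0 <= s -> linf p (lerp s p q) = s * linf p q.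
Proof.
  intros Hs. rewrite <- linf_scale by exact Hs. unfold linf, lerp; simpl.
  f_equal; f_equal; ring.
Qed.

Lemma linf_lerp_r s p q : s <= 1 -> linf (lerp s p q) q = (1 - s) * linf p q.
Proof.
  intros Hs. rewrite <- linf_scale by lra. unfold linf, lerp; simpl.
  f_equal; f_equal; ring.
Qed.

Lemma segment_meets_line a p q :
  a * fst p <= snd p -> snd q <= a * fst q ->
  exists s, 0 <= s <= 1 /\ snd (lerp s p q) = a * fst (lerp s p q).
Proof.
  intros Hp Hq. unfold lerp; simpl.
  set (h0 := snd p - a * fst p); set (h1 := snd q - a * fst q).
  destruct (Req_dec h0 h1) as [Heq|Hne].
  - exists 0; split; [lra|]. unfold h0, h1 in *; lra.
  - assert (Hgap : 0 < h0 - h1) by (unfold h0, h1 in *; lra).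
    assert (Hh0 : 0 <= h0) by (unfold h0; lra).
    assert (Hh1 : h1 <= 0) by (unfold h1; lra).
    assert (Hk : h0 / (h0 - h1) * (h0 - h1) = h0) by (field; lra).
    exists (h0 / (h0 - h1)). split; [split|]; [nra | nra |].
    unfold h0, h1 in *; nra.
Qed.

Lemma cross_same_slope a p q :
  a * fst p <= snd p -> snd q <= a * fst q -> cross a a p q = linf p q.
Proof.
  intros Hp Hq. apply Rle_antisym.
  - destruct (segment_meets_line a p q Hp Hq) as [s [Hs Hline]].
    eapply Rle_trans; [apply (cross_le a a p q (fst (lerp s p q)))|].
    rewrite <- Hline, <- surjective_pairing, linf_lerp_l, linf_lerp_r by lra.
    lra.
  - apply cross_ge; intros t; apply linf_triangle.
Qed.

Definition plane_point {a b : R} (x : Glue a b) : R * R :=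
  match x with inl p => proj1_sig p | inr q => proj1_sig q end.

Lemma dGlue_same_slope a (x y : Glue a a) :
  dGlue a a x y = linf (plane_point x) (plane_point y).
Proof.
  destruct x as [[p Hp]|[p Hp]], y as [[q Hq]|[q Hq]]; simpl; try reflexivity.
  - now apply cross_same_slope.
  - rewrite cross_same_slope by assumption. apply linf_sym.
Qed.

Lemma plane_point_surj a (w : R * R) : exists x : Glue a a, plane_point x = w.
Proof.
  destruct (Rle_dec (a * fst w) (snd w)) as [Hw|Hw].
  - now exists (inl (exist _ w Hw)).
  - assert (Hw' : snd w <= a * fst w) by lra.
    now exists (inr (exist _ w Hw')).
Qed.

Lemma hyperconvex_dGlue_same_slope a : hyperconvex (dGlue a a).
Proof.
  apply (hyperconvex_isometric_surj _ _ plane_point (dGlue_same_slope a)).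
  - apply plane_point_surj.
  - apply hyperconvex_linf.
Qed.

Lemma cross_ge_dist_fst a b p q : Rabs (fst p - fst q) <= cross a b p q.
Proof.
  apply cross_ge; intros t.
  replace (fst p - fst q) with ((fst p - t) + (t - fst q)) by ring.
  eapply Rle_trans; [apply Rabs_triang|].
  apply Rplus_le_compat;
    [apply (linf_ge_fst p (t, a * t)) | apply (linf_ge_fst (t, b * t) q)].
Qed.

Lemma cross_to_0m1_ge_1 a b p :
  0 <= b <= 1 -> 0 <= fst p -> 1 <= cross a b p (0, -1).
Proof.
  intros Hb Hp. apply cross_ge; intros t.
  pose proof (linf_nonneg p (t, a * t)) as Hd.
  pose proof (linf_ge_fst p (t, a * t)) as Hx; simpl in Hx.
  pose proof (linf_ge_snd (t, b * t) (0, -1)) as Hy; simpl in Hy.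
  pose proof (Rle_abs (fst p - t)). pose proof (Rle_abs (b * t - -1)).
  destruct (Rle_or_lt 0 t).
  - assert (0 <= b * t) by nra. lra.
  - assert (0 <= (1 - b) * - t) by nra. lra.
Qed.

Lemma cross_from_01_gt_1 a b q :
  0 <= a <= b -> 0 < fst q -> snd q < 0 -> 1 < cross a b (0, 1) q.
Proof.
  intros Hab Hu Hv.
  apply Rlt_le_trans with (1 + Rmin (fst q) (- snd q)).
  { apply Rmin_case; lra. }
  apply cross_ge; intros t.
  pose proof (linf_ge_snd (0, 1) (t, a * t)) as Hy; simpl in Hy.
  pose proof (linf_ge_fst (t, b * t) q) as Hx'; simpl in Hx'.
  pose proof (linf_ge_snd (t, b * t) q) as Hy'; simpl in Hy'.
  pose proof (Rle_abs (1 - a * t)).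
  rewrite <- Rabs_Ropp in Hx'. pose proof (Rle_abs (- (t - fst q))).
  pose proof (Rle_abs (b * t - snd q)).
  pose proof (Rmin_l (fst q) (- snd q)). pose proof (Rmin_r (fst q) (- snd q)).
  destruct (Rle_or_lt 0 t).
  - assert (0 <= (b - a) * t) by nra. lra.
  - assert (0 <= (1 + a) * - t) by nra. lra.
Qed.

Inductive three := C | D | E.

Section DistinctSlopes.

Variables a b : R.
Hypothesis Ha : 0 <= a.
Hypothesis Hab : a < b.
Hypothesis Hb : b <= 1.

(* [s] solves [1 - b s = s], so both gluing detours below are tight. *)
Let s := / (1 + b).
Let gap := (b - a) * s.

Lemma s_spec : 0 < s /\ s * (1 + b) = 1.
Proof. split; [apply Rinv_0_lt_compat; lra | unfold s; field; lra]. Qed.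

Lemma gap_bounds : 0 < gap <= 1 / 2.
Proof. destruct s_spec. unfold gap. split; nra. Qed.

Lemma C_in_H1 : a * fst (0, 1) <= snd (0, 1).
Proof. simpl; lra. Qed.

Lemma D_in_H2 : snd (0, -1) <= b * fst (0, -1).
Proof. simpl; lra. Qed.

Lemma E_in_H2 : snd (1, 0) <= b * fst (1, 0).
Proof. simpl; lra. Qed.

Definition center (i : three) : Glue a b :=
  match i with
  | C => inl (exist _ (0, 1) C_in_H1)
  | D => inr (exist _ (0, -1) D_in_H2)
  | E => inr (exist _ (1, 0) E_in_H2)
  end.

Definition radius (i : three) : R :=
  match i with C => 1 | D => 1 - gap | E => gap end.

Lemma cross_C_D : cross a b (0, 1) (0, -1) <= radius C + radius D.
Proof.
  destruct s_spec. eapply Rle_trans; [apply (cross_le a b _ _ (- s))|].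
  assert (linf (0, 1) (- s, a * - s) <= 1 + a * s)
    by (apply linf_le; simpl; apply Rabs_le; nra).
  assert (linf (- s, b * - s) (0, -1) <= s)
    by (apply linf_le; simpl; apply Rabs_le; nra).
  simpl; unfold gap; nra.
Qed.

Lemma cross_C_E : cross a b (0, 1) (1, 0) <= radius C + radius E.
Proof.
  destruct s_spec. eapply Rle_trans; [apply (cross_le a b _ _ s)|].
  assert (linf (0, 1) (s, a * s) <= 1 - a * s)
    by (apply linf_le; simpl; apply Rabs_le; nra).
  assert (linf (s, b * s) (1, 0) <= b * s)
    by (apply linf_le; simpl; apply Rabs_le; nra).
  simpl; unfold gap; nra.
Qed.

Lemma balls_meet_pairwise i j :
  dGlue a b (center i) (center j) <= radius i + radius j.
Proof.
  pose proof gap_bounds. pose proof cross_C_D. pose proof cross_C_E.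
  destruct i, j; simpl in *; try lra;
    apply linf_le; simpl; apply Rabs_le; lra.
Qed.

Lemma balls_no_common_point z : ~ (forall i, dGlue a b (center i) z <= radius i).
Proof.
  intros Hz. pose proof gap_bounds.
  pose proof (Hz C) as HC; pose proof (Hz D) as HD; pose proof (Hz E) as HE.
  destruct z as [[w Hw]|[w Hw]]; simpl in HC, HD, HE.
  - pose proof (cross_ge_dist_fst a b w (1, 0)); simpl in *.
    pose proof (Rle_abs (- (fst w - 1))); rewrite Rabs_Ropp in *.
    pose proof (cross_to_0m1_ge_1 a b w ltac:(lra) ltac:(lra)). lra.
  - pose proof (linf_ge_fst (1, 0) w); pose proof (linf_ge_snd (0, -1) w); simpl in *.
    pose proof (Rle_abs (1 - fst w)). pose proof (Rle_abs (- (-1 - snd w))).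
    rewrite Rabs_Ropp in *.
    pose proof (cross_from_01_gt_1 a b w ltac:(lra) ltac:(lra) ltac:(lra)). lra.
Qed.

Lemma not_hyperconvex_dGlue : ~ hyperconvex (dGlue a b).
Proof.
  intros H. destruct (H three center radius balls_meet_pairwise) as [z Hz].
  exact (balls_no_common_point z Hz).
Qed.

End DistinctSlopes.

Theorem mainTheorem17 (a b : R) (Ha : 0 <= a) (Hab : a <= b) (Hb : b <= 1) :
  hyperconvex (dGlue a b) <-> a = b.
Proof.
  split.
  - intros H. destruct (Rle_lt_or_eq_dec a b Hab) as [Hlt|Heq]; [|exact Heq].
    exfalso. exact (not_hyperconvex_dGlue a b Ha Hlt Hb H).
  - intros <-. apply hyperconvex_dGlue_same_slope.
Qed.
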